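(* Let $D$ be any distribution of $(X,A,Y)$ on $\mathcal{X}\times\{0,1\}\times\{0,1\}$ ($\mathcal{X}$ discrete), and let $\tilde D_t$ be obtained by applying the one-step bias process $t$ times, step $i$ with parameters $(\beta_{p,i},\beta_{n,i},\nu_i)$; let $(X,A,\tilde Y_t)$ denote a random point from $\tilde D_t$ and $c_i=\beta_{n,i}/\beta_{p,i}$. Let $\eta(x,a)=\Pr[Y=1\mid X=x,A=a]$ and $\tilde\eta_t(x,a)=\Pr[\tilde Y_t=1\mid X=x,A=a]$. Then $$\tilde\eta_t(x,0)=\frac{\eta(x,0)}{\displaystyle\sum_{i=1}^t\Big(\frac{1-c_i}{1-\nu_i}\prod_{j=i+1}^t\frac{c_j}{1-\nu_j}\Big)\eta(x,0)+\prod_{i=1}^t\frac{c_i}{1-\nu_i}},$$ where $\prod_{j=t+1}^t\frac{c_j}{1-\nu_j}=1$.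
   Context: One-step bias process with parameters $(\beta_p',\beta_n',\nu')$, $\beta_p',\beta_n',\nu'\in(0,1)$, applied to a distribution of $(X,A,Y)$: points with $A=1$ are kept unchanged; points with $A=0,Y=1$ survive independently with probability $\beta_p'$, points with $A=0,Y=0$ survive independently with probability $\beta_n'$; each surviving point with $A=0,Y=1$ keeps label $1$ with probability $1-\nu'$ and is flipped to $0$ with probability $\nu'$; the output is the distribution of surviving points. $\tilde D_t$ results from applying step $i$ to the output of step $i-1$, starting from $D$. *)

From HB Require Import structures.
From mathcomp Require Import all_boot all_order all_algebra.
From mathcomp Require Import all_classical all_reals all_analysis.
Set Implicit Arguments. Unset Strict Implicit. Unset Printing Implicit Defensive.
Import Order.TTheory GRing.Theory Num.Theory.
Local Open Scope classical_set_scope.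
Local Open Scope ring_scope.

(* A discrete distribution of (X,A,Y) on X x {0,1} x {0,1} (X countable),
   given by its probability mass function; A = true means A = 1, etc. *)
Definition mass (R : realType) (X : countType) := X * bool * bool -> R.

Definition is_distr (R : realType) (X : countType) (D : mass R X) : Prop :=
  (forall z, 0 <= D z) /\ (\esum_(z in [set: X * bool * bool]) (D z)%:E = 1)%E.

Definition bias_surv (R : realType) (X : countType) (bp bn nu : R) (D : mass R X)
  : mass R X := fun z =>
  match z with
  | (x, true, y) => D (x, true, y)
  | (x, false, true) => bp * (1 - nu) * D (x, false, true)
  | (x, false, false) => bn * D (x, false, false) + bp * nu * D (x, false, true)
  end.

Definition bias_step (R : realType) (X : countType) (bp bn nu : R) (D : mass R X)
  : mass R X := fun z =>
  bias_surv bp bn nu D z /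
    fine (\esum_(w in [set: X * bool * bool]) (bias_surv bp bn nu D w)%:E)%E.

Fixpoint bias_iter (R : realType) (X : countType) (bp bn nu : nat -> R)
  (D : mass R X) (t : nat) : mass R X :=
  match t with
  | 0 => D
  | t'.+1 => bias_step (bp t'.+1) (bn t'.+1) (nu t'.+1) (bias_iter bp bn nu D t')
  end.

Definition cond_eta (R : realType) (X : countType) (D : mass R X) (x : X) (a : bool)
  : R := D (x, a, true) / (D (x, a, true) + D (x, a, false)).

From HB Require Import structures.
From mathcomp Require Import all_boot all_order all_algebra.
From mathcomp Require Import all_classical all_reals all_analysis.
From mathcomp Require Import lra ring.
Set Implicit Arguments.
Unset Strict Implicit.
Unset Printing Implicit Defensive.
Import Order.TTheory GRing.Theory Num.Theory.
Local Open Scope ring_scope.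

(* One bias step acts on [eta(x,0)] as the Moebius map
   [eta |-> eta / (a eta + b)] with [a = (1 - c)/(1 - nu)] and [b = c/(1 - nu)]:
   the renormalisation of the surviving mass cancels in the conditional
   probability.  Such maps compose as [eta |-> eta / (S eta + P)] with
   [S |-> b S + a] and [P |-> b P], whose solution from [S = 0], [P = 1] is the
   sum and product of the statement.  All denominators stay positive on
   [0 <= eta <= 1] because [P > 0] and [S + P >= 1], the latter since
   [a + b = 1/(1 - nu) >= 1]. *)

Section TailProductSum.
Variables (R : comPzRingType) (a b : nat -> R).

Definition tail_prod_sum (t : nat) : R :=
  \sum_(1 <= i < t.+1) a i * \prod_(i.+1 <= j < t.+1) b j.

Lemma tail_prod_sumS t : tail_prod_sum t.+1 = tail_prod_sum t * b t.+1 + a t.+1.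
Proof.
rewrite /tail_prod_sum big_nat_recr //= [X in a _ * X]big_geq // mulr1 big_distrl /=.
congr (_ + _); apply: eq_big_nat => i /andP[_ lt_it].
by rewrite big_nat_recr //= mulrA.
Qed.

End TailProductSum.

Lemma affine_unit_gt0 (R : realFieldType) (S P e : R) :
  0 < P -> 0 < S + P -> 0 <= e <= 1 -> 0 < S * e + P.
Proof.
move=> P_gt0 SP_gt0 /andP[e_ge0 e_le1].
have -> : S * e + P = e * (S + P) + (1 - e) * P by ring.
have [->|e_neq0] := eqVneq e 0; first by rewrite mul0r add0r subr0 mul1r.
have e_gt0 : 0 < e by rewrite lt_neqAle eq_sym e_neq0.
apply: lt_le_trans (mulr_gt0 e_gt0 SP_gt0) _.
by rewrite lerDl mulr_ge0 ?subr_ge0 // ltW.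
Qed.

Section MoebiusOrbit.
Variables (R : realFieldType) (a b : nat -> R) (t : nat).
Hypothesis coef_ok : forall i, (1 <= i <= t)%N -> 0 < b i /\ 1 <= a i + b i.

Lemma prod_coef_gt0 k : (k <= t)%N -> 0 < \prod_(1 <= i < k.+1) b i.
Proof.
move=> le_kt; rewrite big_nat_cond prodr_gt0 // => i /andP[/andP[i_ge1 lt_ik] _].
by case: (@coef_ok i _) => //; rewrite i_ge1 (leq_trans _ le_kt).
Qed.

Lemma tail_prod_sum_add_prod_ge1 k :
  (k <= t)%N -> 1 <= tail_prod_sum a b k + \prod_(1 <= i < k.+1) b i.
Proof.
elim: k => [|k IHk lt_kt]; first by rewrite /tail_prod_sum !big_geq // add0r.
have [b_gt0 ab_ge1] := @coef_ok k.+1 lt_kt.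
have IH := IHk (ltnW lt_kt).
rewrite tail_prod_sumS big_nat_recr //=.
have : b k.+1 <= b k.+1 * (tail_prod_sum a b k + \prod_(1 <= i < k.+1) b i).
  by rewrite ler_peMr // ltW.
lra.
Qed.

Lemma moebius_orbit (eta : nat -> R) :
  0 <= eta 0%N <= 1 ->
  (forall k, (k < t)%N -> eta k.+1 = eta k / (a k.+1 * eta k + b k.+1)) ->
  eta t = eta 0%N / (tail_prod_sum a b t * eta 0%N + \prod_(1 <= i < t.+1) b i).
Proof.
move=> eta0_01 eta_rec; set e := eta 0%N.
have den_gt0 k : (k <= t)%N ->
    0 < tail_prod_sum a b k * e + \prod_(1 <= i < k.+1) b i.
  move=> le_kt; apply: affine_unit_gt0 => //; first exact: prod_coef_gt0.
  exact: lt_le_trans ltr01 (tail_prod_sum_add_prod_ge1 le_kt).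
suff eta_k : forall k, (k <= t)%N ->
    eta k = e / (tail_prod_sum a b k * e + \prod_(1 <= i < k.+1) b i) by exact: eta_k.
elim=> [_|k IHk lt_kt]; first by rewrite /tail_prod_sum !big_geq // mul0r add0r divr1.
have den_k := den_gt0 k (ltnW lt_kt); have den_k1 := den_gt0 k.+1 lt_kt.
rewrite tail_prod_sumS big_nat_recr //= in den_k1 *.
rewrite eta_rec // IHk ?(ltnW lt_kt) //.
by field; rewrite ?gt_eqF.
Qed.

End MoebiusOrbit.

Section ExtendedSums.
Local Open Scope classical_set_scope.
Local Open Scope ereal_scope.

Lemma esumZl (R : realType) (T : choiceType) (k : R) (u : T -> \bar R) :
  (0 <= k)%R -> (forall z, 0 <= u z) ->
  \esum_(z in [set: T]) (k%:E * u z) = k%:E * \esum_(z in [set: T]) u z.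
Proof.
move=> k_ge0 u_ge0; rewrite /esum -ereal_supZl //; last first.
  by apply/set0P; exists (\sum_(i \in set0) u i); exists set0 => //; exact: fsets_set0.
congr ereal_sup; apply/seteqP; split => y /=.
  move=> [A fA <-]; exists (\sum_(i \in A) u i); first by exists A.
  by rewrite ge0_mule_fsumr.
by move=> [_ [A fA <-] <-]; exists A => //; rewrite ge0_mule_fsumr.
Qed.

End ExtendedSums.

Section Mass.
Variables (R : realType) (X : countType).
Local Open Scope classical_set_scope.

Definition total_mass (D : mass R X) : \bar R :=
  (\esum_(z in [set: X * bool * bool]) (D z)%:E)%E.

Definition group_mass (D : mass R X) (x : X) (a : bool) : R :=
  D (x, a, true) + D (x, a, false).

Definition flip_label (z : X * bool * bool) : X * bool * bool :=
  (z.1.1, z.1.2, ~~ z.2).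

Lemma total_mass_ge (D : mass R X) z : ((D z)%:E <= total_mass D)%E.
Proof.
apply: esum_ge; exists [set z]; first by split; [exact: finite_set1|].
by rewrite fsbig_set1.
Qed.

Lemma total_mass_flip (D : mass R X) : total_mass (D \o flip_label) = total_mass D.
Proof.
apply/esym/reindex_esum; rewrite setTT_bijective.
by apply: inv_bij => -[[u a] y]; rewrite /flip_label /= negbK.
Qed.

Lemma total_mass_divr (D : mass R X) (k : R) : 0 <= k -> (forall z, 0 <= D z) ->
  total_mass (fun z => D z / k) = ((k^-1)%:E * total_mass D)%E.
Proof.
move=> k_ge0 D_ge0; rewrite /total_mass -esumZl ?invr_ge0 //.
by apply: eq_esum => z _; rewrite mulrC EFinM.
Qed.

Lemma cond_eta_divr (D : mass R X) (k : R) x a : k != 0 ->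
  cond_eta (fun z => D z / k) x a = cond_eta D x a.
Proof.
by move=> k_neq0; rewrite /cond_eta -mulrDl invfM invrK mulrACA mulVf // mulr1.
Qed.

Lemma cond_eta_ge0_le1 (D : mass R X) x a :
  (forall z, 0 <= D z) -> 0 <= cond_eta D x a <= 1.
Proof.
move=> D_ge0; have := D_ge0 (x, a, true); have := D_ge0 (x, a, false).
rewrite /cond_eta => q0_ge0 q1_ge0.
have [->|s_neq0] := eqVneq (D (x, a, true) + D (x, a, false)) 0.
  by rewrite invr0 mulr0 lexx ler01.
have s_gt0 : 0 < D (x, a, true) + D (x, a, false).
  by rewrite lt_neqAle eq_sym s_neq0 addr_ge0.
by rewrite divr_ge0 ?addr_ge0 //= ler_pdivrMr // mul1r lerDl.
Qed.

End Mass.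
Arguments flip_label {X}.

Section BiasStep.
Variables (R : realType) (X : countType) (bp bn nu : R).
Hypotheses (bp01 : 0 < bp < 1) (bn01 : 0 < bn < 1) (nu01 : 0 < nu < 1).
Local Notation surv := (bias_surv bp bn nu).
Local Notation step := (bias_step bp bn nu).

Lemma bias_surv_ge0 (D : mass R X) :
  (forall z, 0 <= D z) -> forall z, 0 <= surv D z.
Proof.
case/andP: bp01 => /ltW bp_ge0 _; case/andP: bn01 => /ltW bn_ge0 _.
case/andP: nu01 => /ltW nu_ge0 /ltW nu_le1.
move=> D_ge0 [[u [|]] [|]] /=; rewrite ?D_ge0 //.
  by rewrite !mulr_ge0 ?subr_ge0.
by rewrite addr_ge0 ?mulr_ge0.
Qed.

Lemma bias_surv_le (D : mass R X) :
  (forall z, 0 <= D z) -> forall z, surv D z <= D z + D (flip_label z).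
Proof.
case/andP: bp01 => /ltW bp_ge0 /ltW bp_le1; case/andP: bn01 => _ /ltW bn_le1.
case/andP: nu01 => /ltW nu_ge0 /ltW nu_le1.
move=> D_ge0 [[u [|]] [|]] /=; rewrite /flip_label /= ?lerDl ?D_ge0 //.
  rewrite -[X in X <= _]addr0 lerD //.
  by rewrite ler_piMl // mulr_ile1 ?subr_ge0 // lerBlDr lerDl.
by rewrite lerD // ler_piMl // mulr_ile1.
Qed.

Lemma group_mass_bias_surv (D : mass R X) x :
  group_mass (surv D) x false = bp * D (x, false, true) + bn * D (x, false, false).
Proof. by rewrite /group_mass /=; ring. Qed.

Lemma total_mass_bias_surv_fin_num (D : mass R X) :
  is_distr D -> total_mass (surv D) \is a fin_num.
Proof.
case=> D_ge0 D_total.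
rewrite ge0_fin_numE; last by apply: esum_ge0 => z _; rewrite lee_fin bias_surv_ge0.
apply: (le_lt_trans (le_esum (b := fun z => (D z)%:E + (D (flip_label z))%:E)%E _)).
  by move=> z _; rewrite lee_fin bias_surv_le.
rewrite esumD => [|z _|z _]; rewrite ?lee_fin //.
rewrite -[E in (_ + E)%E]/(total_mass (D \o flip_label)) total_mass_flip /total_mass D_total.
by apply: lte_add_pinfty; exact: ltry.
Qed.

Lemma group_mass_bias_surv_gt0 (D : mass R X) x : (forall z, 0 <= D z) ->
  0 < group_mass D x false -> 0 < group_mass (surv D) x false.
Proof.
case/andP: bp01 => bp_gt0 _; case/andP: bn01 => bn_gt0 _.
move=> D_ge0; rewrite group_mass_bias_surv /group_mass => D_x.
have q0_ge0 := D_ge0 (x, false, false).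
have [q1_gt0|q1_le0] := ltP 0 (D (x, false, true)).
  by apply: ltr_wpDr; [exact: mulr_ge0 (ltW bn_gt0) q0_ge0 | exact: mulr_gt0].
have -> : D (x, false, true) = 0 by apply/eqP; rewrite eq_le q1_le0 D_ge0.
by rewrite mulr0 add0r mulr_gt0 //; lra.
Qed.

Lemma bias_surv_norm_gt0 (D : mass R X) x :
  is_distr D -> 0 < group_mass D x false -> 0 < fine (total_mass (surv D)).
Proof.
move=> D_distr D_x; have [z S_z_gt0] : exists z, 0 < surv D z.
  have := group_mass_bias_surv_gt0 D_distr.1 D_x; rewrite /group_mass.
  have [S_xt_gt0 _|S_xt_le0] := ltP 0 (surv D (x, false, true)); first by exists (x, false, true).
  by exists (x, false, false); lra.
apply: lt_le_trans S_z_gt0 _.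
by rewrite -lee_fin fineK ?total_mass_bias_surv_fin_num // total_mass_ge.
Qed.

Lemma bias_stepE (D : mass R X) :
  step D = (fun z => surv D z / fine (total_mass (surv D))).
Proof. by []. Qed.

Lemma is_distr_bias_step (D : mass R X) x :
  is_distr D -> 0 < group_mass D x false -> is_distr (step D).
Proof.
move=> D_distr D_x; have N_gt0 := bias_surv_norm_gt0 D_distr D_x.
have S_ge0 := bias_surv_ge0 D_distr.1.
rewrite bias_stepE; split => [z|]; first by rewrite divr_ge0 // ltW.
rewrite -/(total_mass _) total_mass_divr ?(ltW N_gt0) //.
rewrite -[total_mass (surv D)]fineK ?total_mass_bias_surv_fin_num //.
by rewrite -EFinM mulVf // gt_eqF.
Qed.

Lemma group_mass_bias_step_gt0 (D : mass R X) x :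
  is_distr D -> 0 < group_mass D x false -> 0 < group_mass (step D) x false.
Proof.
move=> D_distr D_x; rewrite bias_stepE /group_mass -mulrDl divr_gt0 //.
  exact: group_mass_bias_surv_gt0 D_distr.1 D_x.
exact: bias_surv_norm_gt0 D_distr D_x.
Qed.

Lemma cond_eta_bias_step (D : mass R X) x :
  is_distr D -> 0 < group_mass D x false ->
  cond_eta (step D) x false =
    cond_eta D x false /
      ((1 - bn / bp) / (1 - nu) * cond_eta D x false + bn / bp / (1 - nu)).
Proof.
move=> D_distr D_x.
rewrite bias_stepE cond_eta_divr ?gt_eqF ?(bias_surv_norm_gt0 D_distr D_x) //.
have S_x := group_mass_bias_surv_gt0 D_distr.1 D_x.
rewrite group_mass_bias_surv in S_x; rewrite /group_mass in D_x.
rewrite /cond_eta /=.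
set q1 := D (x, false, true) in D_x S_x *; set q0 := D (x, false, false) in D_x S_x *.
case/andP: bp01 => bp_gt0 _; case/andP: nu01 => _ nu_lt1.
have nu_neq1 : 1 - nu != 0 by rewrite subr_eq0 eq_sym lt_eqF.
have -> : (1 - bn / bp) / (1 - nu) * (q1 / (q1 + q0)) + bn / bp / (1 - nu)
    = (bp * q1 + bn * q0) / (bp * (1 - nu) * (q1 + q0)).
  by field; rewrite nu_neq1 !gt_eqF.
by field; rewrite nu_neq1 !gt_eqF.
Qed.

End BiasStep.

Lemma bias_iter_invariant (R : realType) (X : countType) (D : mass R X)
    (bp bn nu : nat -> R) (t : nat) (x : X) :
  is_distr D ->
  (forall i, (1 <= i <= t)%N -> [/\ 0 < bp i < 1, 0 < bn i < 1 & 0 < nu i < 1]) ->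
  0 < group_mass D x false ->
  forall k, (k <= t)%N ->
    is_distr (bias_iter bp bn nu D k) /\ 0 < group_mass (bias_iter bp bn nu D k) x false.
Proof.
move=> D_distr params D_x; elim=> [//|k IHk lt_kt].
have [Dk_distr Dk_x] := IHk (ltnW lt_kt).
have [bp01 bn01 nu01] := params k.+1 lt_kt.
split; [exact: is_distr_bias_step Dk_distr Dk_x | exact: group_mass_bias_step_gt0].
Qed.

Theorem proposition7p1 (R : realType) (X : countType) (D : mass R X)
  (bp bn nu : nat -> R) (t : nat) (x : X) :
  is_distr D ->
  (forall i, (1 <= i <= t)%N ->
     [/\ 0 < bp i < 1, 0 < bn i < 1 & 0 < nu i < 1]) ->
  0 < D (x, false, true) + D (x, false, false) ->
  let c := fun i => bn i / bp i in
  cond_eta (bias_iter bp bn nu D t) x false =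
  cond_eta D x false /
    ((\sum_(1 <= i < t.+1)
        ((1 - c i) / (1 - nu i) *
         \prod_(i.+1 <= j < t.+1) (c j / (1 - nu j)))) * cond_eta D x false
     + \prod_(1 <= i < t.+1) (c i / (1 - nu i))).
Proof.
move=> D_distr params D_x c.
have invariant := bias_iter_invariant D_distr params D_x.
pose eta k := cond_eta (bias_iter bp bn nu D k) x false.
apply: (moebius_orbit (a := fun i => (1 - c i) / (1 - nu i))
                      (b := fun i => c i / (1 - nu i)) _ (eta := eta)).
- move=> i /params[/andP[bp_gt0 _] /andP[bn_gt0 _] /andP[nu_gt0 nu_lt1]].
  split; first by rewrite !divr_gt0 ?subr_gt0.
  by rewrite -mulrDl subrK mul1r invf_ge1 ?subr_gt0 // gerBl ltW.
- exact: cond_eta_ge0_le1 D_distr.1.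
- move=> k lt_kt; have [Dk_distr Dk_x] := invariant k (ltnW lt_kt).
  have [bp01 bn01 nu01] := params k.+1 lt_kt.
  exact: cond_eta_bias_step.
Qed.
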